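(* Let $\psi$ and $\phi$ be Borel probability measures on $\mathbb R_+=[0,\infty)$, each with full support on $\mathbb R_+$. For every Borel measurable $\sigma:\mathbb R_+\to\mathbb R_+$ with $\sigma(w)\le w$ for all $w$, the transition kernel on $\mathbb R_+$ defined by $$P_\sigma(w,B)=\int\!\!\int \mathbb 1_B\big(\eta'(w-\sigma(w))+y'\big)\,\psi(\mathrm d\eta')\,\phi(\mathrm dy')\qquad(w\in\mathbb R_+,\ B\subset\mathbb R_+\text{ Borel})$$ is open set irreducible.
   Context: $\mathbb R_+$ carries its usual metric (open sets are relatively open subsets of $[0,\infty)$). A measure has full support on $\mathbb R_+$ if it assigns positive mass to every nonempty open subset of $\mathbb R_+$. For a transition kernel $Q$ on a metric space $\mathsf X$, $Q^n$ denotes the $n$-step kernel; a point $y$ is $Q$-reachable from $x$ if for every open neighborhood $G$ of $y$ there is $n\in\mathbb N=\{1,2,\dots\}$ with $Q^n(x,G)>0$; $Q$ is open set irreducible if every $y\in\mathsf X$ is $Q$-reachable from every $x\in\mathsf X$. *)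

From HB Require Import structures.
From mathcomp Require Import all_boot all_order all_algebra.
From mathcomp Require Import all_classical all_reals all_analysis.
Set Implicit Arguments. Unset Strict Implicit. Unset Printing Implicit Defensive.
Import Order.TTheory GRing.Theory Num.Theory.
Import numFieldNormedType.Exports.
Local Open Scope classical_set_scope.
Local Open Scope ring_scope.

Definition Rplus (R : realType) : set R := [set x : R | 0 <= x].
Arguments Rplus R : clear implicits.

(* A (Borel) probability measure on R is "a probability measure on R_+"
   when it is concentrated on R_+. *)
Definition concentrated_on_Rplus (R : realType) (mu : probability R R) : Prop :=
  mu (~` Rplus R) = 0%E.

Definition full_support_Rplus (R : realType) (mu : set R -> \bar R) : Prop :=
  forall U : set R, open U -> U `&` Rplus R !=set0 -> (0 < mu (U `&` Rplus R))%E.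

(* n-step kernels: kpow Q n = Q^(n+1), with Q^(n+2)(x,B) = \int Q(x,dz) Q^(n+1)(z,B). *)
Fixpoint kpow (R : realType) (Q : R -> {measure set R -> \bar R}) (n : nat)
  : R -> set R -> \bar R :=
  match n with
  | O => fun x B => Q x B
  | S m => fun x B => (\int[Q x]_z kpow Q m z B)%E
  end.

(* Open set irreducibility of a kernel on the state space R_+:
   every y in R_+ is reachable from every x in R_+, i.e. every open
   neighbourhood G = U `&` R_+ of y in R_+ gets positive Q^n(x, G) mass
   for some n >= 1 (here n = m+1). *)
Definition open_set_irreducible (R : realType) (Q : R -> {measure set R -> \bar R})
  : Prop :=
  forall x y : R, Rplus R x -> Rplus R y ->
  forall U : set R, open U -> U y ->
  exists m : nat, (0 < kpow Q m x (U `&` Rplus R))%E.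

Definition P_formula (R : realType) (psi phi : probability R R) (sigma : R -> R)
  (w : R) (B : set R) : \bar R :=
  (\int[phi]_y' \int[psi]_eta' (\1_B (eta' * (w - sigma w) + y') : R)%:E)%E.

From HB Require Import structures.
From mathcomp Require Import all_boot all_order all_algebra.
From mathcomp Require Import all_classical all_reals all_analysis.
From mathcomp Require Import measurable_realfun.
Import Order.TTheory GRing.Theory Num.Theory.
Import numFieldNormedType.Exports.
Local Open Scope classical_set_scope.
Local Open Scope ring_scope.

(* A single step of the kernel already suffices.  Given w, y in R_+ and a
   neighbourhood ball y e of y, put a := w - sigma w >= 0.  Whenever
   |eta' a| < e/2 and |y' - y| < e/2 the point eta' a + y' lies in
   ball y e and in R_+, so P_sigma(w, U) is bounded below by the product
   of the psi-mass of a relative neighbourhood of 0 and the phi-mass of a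
   relative neighbourhood of y, both positive by full support. *)

Section IntegralLowerBound.
Local Open Scope ereal_scope.
Context d (T : measurableType d) (R : realType).
Variable mu : {measure set T -> \bar R}.

(* No measurability is needed: the integral of a nonnegative function is
   the supremum of the integrals of the simple functions below it. *)
Lemma ge0_le_integral_nonmeasurable (f g : T -> \bar R) :
  (forall x, 0 <= g x) -> (forall x, g x <= f x) ->
  \int[mu]_x g x <= \int[mu]_x f x.
Proof.
move=> g0 gf; have f0 x : 0 <= f x by exact: le_trans (g0 x) (gf x).
rewrite !ge0_integralTE //.
apply: ge_ereal_sup => _ [h hg <-]; apply: ereal_sup_ubound; exists h => //.
by move=> x; exact: le_trans (hg x) (gf x).
Qed.

Lemma mul_measure_le_integral (f : T -> \bar R) (A : set T) (c : \bar R) :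
  measurable A -> 0 <= c -> (forall x, 0 <= f x) ->
  (forall x, A x -> c <= f x) ->
  c * mu A <= \int[mu]_x f x.
Proof.
move=> mA c0 f0 cf; rewrite -integral_cst // integral_mkcond.
apply: ge0_le_integral_nonmeasurable => x; rewrite /patch; case: ifP => //.
by rewrite inE => /cf.
Qed.

End IntegralLowerBound.

Lemma ball_shift {R : numDomainType} {V : pseudoMetricNormedZmodType R}
    (x y u : V) (r s : R) :
  ball x r y -> ball 0 s u -> ball x (r + s) (u + y).
Proof.
move=> xy u0; apply: ball_triangle xy _; move: u0.
by rewrite -!ball_normE /= opprD addrCA subrr addr0 sub0r.
Qed.

Lemma measurable_openIRplus (R : realType) (U : set R) :
  open U -> measurable (U `&` Rplus R).
Proof.
move=> oU; apply: measurableI; first exact: open_measurable.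
by apply: closed_measurable; exact: closed_ge.
Qed.

Lemma mul_measure_le_P_formula (R : realType) (psi phi : probability R R)
    (sigma : R -> R) (w : R) (B V W : set R) :
  measurable V -> measurable W ->
  (forall t z, V t -> W z -> B (t * (w - sigma w) + z)) ->
  (psi V * phi W <= P_formula psi phi sigma w B)%E.
Proof.
move=> mV mW VWB; apply: mul_measure_le_integral => //.
- move=> z; apply: integral_ge0 => t _; by rewrite lee_fin indicE ler0n.
- move=> z Wz; rewrite -[X in (X <= _)%E]mul1e.
  apply: mul_measure_le_integral => // t Vt.
  by rewrite lee_fin indicE (mem_set (VWB _ _ Vt Wz)).
Qed.

Theorem lemma5p1 (R : realType) (psi phi : probability R R)
  (psi_Rplus : concentrated_on_Rplus psi) (phi_Rplus : concentrated_on_Rplus phi)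
  (psi_supp : full_support_Rplus psi) (phi_supp : full_support_Rplus phi)
  (sigma : R -> R)
  (sigma_meas : measurable_fun (Rplus R) sigma)
  (sigma_ge0 : forall w, 0 <= w -> 0 <= sigma w)
  (sigma_le : forall w, 0 <= w -> sigma w <= w)
  (P : R -> {measure set R -> \bar R})
  (P_def : forall w, 0 <= w -> forall B, measurable B ->
     P w B = P_formula psi phi sigma w B) :
  open_set_irreducible P.
Proof.
move=> w y w0 y0 U oU Uy; exists 0%N => /=.
rewrite P_def //; last exact: measurable_openIRplus.
have /nbhs_ballP [e /= e0 yeU] : nbhs y U by exact: open_nbhs_nbhs.
have e20 : 0 < e / 2 by rewrite divr_gt0.
set a := w - sigma w; have a0 : 0 <= a by rewrite subr_ge0 sigma_le.
pose V := ( *%R^~ a) @^-1` ball 0 (e / 2).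
have oV : open V by apply: open_comp => [t _|]; [exact: mulrr_continuous|exact: ball_open].
apply: (lt_le_trans _ (@mul_measure_le_P_formula _ psi phi sigma w _
  (V `&` Rplus R) (ball y (e / 2) `&` Rplus R) _ _ _)).
- apply: mule_gt0; [apply: psi_supp => //|apply: phi_supp; first exact: ball_open].
  + by exists 0; split; [rewrite /V /= mul0r; exact: ballxx|rewrite /Rplus /=].
  + by exists y; split; [exact: ballxx|].
- exact: measurable_openIRplus.
- by apply: measurable_openIRplus; exact: ball_open.
- move=> t z [Vt t0] [yz z0]; split; last by rewrite /Rplus /= addr_ge0 ?mulr_ge0.
  by apply: yeU; rewrite [e]splitr; exact: ball_shift yz Vt.
Qed.
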